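(* Let $\mathcal{T}$ be a compact interval, $\boldsymbol{\phi}=(\phi_1,\dots,\phi_m)'$ linearly independent functions in $L^2(\mathcal{T})$, and let $\mathbf{X}(t)=\mathbf{A}'\boldsymbol{\phi}(t)$ be a rank-$M$ ($M=mp$) $p$-variate process with separable covariance $\mathbf{K}(s,t)=\boldsymbol{\Sigma}^{\mathrm{row}}\kappa(s,t)$, random coefficient matrix $\mathbf{A}=(\mathbf{a}_1,\dots,\mathbf{a}_p)\in\mathbb{R}^{m\times p}$, mean $\boldsymbol{\mu}(t)=\mathbf{M}_{\mathbf{A}}'\boldsymbol{\phi}(t)$ with $\mathbf{M}_{\mathbf{A}}=(\mathbf{m}_{\mathbf{A},1},\dots,\mathbf{m}_{\mathbf{A},p})=E\mathbf{A}$, and $\kappa(s,t)=\boldsymbol{\phi}'(s)\boldsymbol{\Sigma}^{\mathrm{col}}\boldsymbol{\phi}(t)$ with $\boldsymbol{\Sigma}^{\mathrm{col}}$ positive definite. Let $(\lambda^{\mathrm{row}}_j,\mathbf{v}^{\mathrm{row}}_j)$, $j=1,\dots,p$, be the eigenpairs of $\boldsymbol{\Sigma}^{\mathrm{row}}$ and $v^{\mathrm{row}}_{j,k}=\mathbf{e}_k'\mathbf{v}^{\mathrm{row}}_j$. Then for each $k\in\{1,\dots,p\}$, $$\theta_k(\mathbf{X},\boldsymbol{\mu};\mathbf{K},M)=\sum_{j=1}^p\frac{1}{\lambda^{\mathrm{row}}_j}v^{\mathrm{row}}_{j,k}(\mathbf{a}_k-\mathbf{m}_{\mathbf{A},k}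)'(\boldsymbol{\Sigma}^{\mathrm{col}})^{-1}(\mathbf{A}-\mathbf{M}_{\mathbf{A}})'\mathbf{v}^{\mathrm{row}}_j.$$
   Context: $\boldsymbol{\Sigma}^{\mathrm{row}}$ is $p\times p$ symmetric positive definite. The covariance operator $\mathcal{C}\mathbf{x}(s)=\int\mathbf{K}(s,t)\mathbf{x}(t)dt$ on $L^2(\mathcal{T})^p$ (inner product $\langle\mathbf{x},\mathbf{y}\rangle=\sum_j\int_{\mathcal{T}}x_jy_j$) has orthonormal eigenfunctions $\boldsymbol{\psi}_i$ and nonincreasing eigenvalues $\pi_i$; $\mathrm{fMMD}^2(\mathbf{Y},\boldsymbol{\mu};\mathbf{K},M)=\sum_{i=1}^M\pi_i^{-1}\langle\mathbf{Y}-\boldsymbol{\mu},\boldsymbol{\psi}_i\rangle^2$. With $P=\{1,\dots,p\}$, $\hat X^S_j=X_j$ if $j\in S$ and $\hat X^S_j=\mu_j$ otherwise, the coordinate Shapley contribution is $\theta_k(\mathbf{X},\boldsymbol{\mu};\mathbf{K},M)=\sum_{S\subseteq P\setminus\{k\}}\frac{|S|!(p-|S|-1)!}{p!}[\mathrm{fMMD}^2(\hat{\mathbf{X}}^{S\cup\{k\}},\boldsymbol{\mu};\mathbf{K},M)-\mathrm{fMMD}^2(\hat{\mathbf{X}}^S,\boldsymbol{\mu};\mathbf{K},M)]$. *)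

From HB Require Import structures.
From mathcomp Require Import all_boot all_order all_algebra.
From mathcomp Require Import all_classical all_reals all_analysis.

Set Implicit Arguments.
Unset Strict Implicit.
Unset Printing Implicit Defensive.
Import Order.TTheory GRing.Theory Num.Theory.
Import numFieldNormedType.Exports.

Local Open Scope classical_set_scope.
Local Open Scope ring_scope.

Section Defs.
Variable R : realType.

Definition L2fun (a b : R) (f : R -> R) : Prop :=
  measurable_fun `[a, b] f /\
  (@lebesgue_measure R).-integrable `[a, b] (fun t => (f t ^+ 2)%:E).

Definition L2vec (p : nat) (a b : R) (x : 'I_p -> R -> R) : Prop :=
  forall j, L2fun a b (x j).

Definition intT (a b : R) (f : R -> R) : R :=
  Rintegral (@lebesgue_measure R) `[a, b] f.

Definition ipv (p : nat) (a b : R) (x y : 'I_p -> R -> R) : R :=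
  \sum_(j < p) intT a b (fun t => x j t * y j t).

Definition lin_indep_L2 (m : nat) (a b : R) (phi : 'I_m -> R -> R) : Prop :=
  forall c : 'I_m -> R,
    intT a b (fun t => (\sum_(i < m) c i * phi i t) ^+ 2) = 0 ->
    forall i, c i = 0.

Definition posdef (n : nat) (S : 'M[R]_n) : Prop :=
  forall u : 'cV[R]_n, u != 0 -> 0 < (u^T *m S *m u) 0 0.

Definition kappa (m : nat) (Scol : 'M[R]_m) (phi : 'I_m -> R -> R) (s t : R) : R :=
  \sum_(i < m) \sum_(l < m) phi i s * Scol i l * phi l t.

Definition sepK (p : nat) (Srow : 'M[R]_p) (kap : R -> R -> R) (s t : R) : 'M[R]_p :=
  kap s t *: Srow.

Definition covop (p : nat) (a b : R) (K : R -> R -> 'M[R]_p)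
  (x : 'I_p -> R -> R) : 'I_p -> R -> R :=
  fun j s => \sum_(l < p) intT a b (fun t => K s t j l * x l t).

(* (psi_i, pi_i)_{i>=0}: a complete orthonormal system of eigenfunctions of C
   in L^2(T)^p with nonincreasing eigenvalues (spectral decomposition of C).
   The eigen-equation C psi_i = pi_i psi_i is understood in L^2 (the difference
   has zero L^2 norm). Index i = 0 corresponds to the paper's i = 1. *)
Definition spectral_decomp (p : nat) (a b : R) (K : R -> R -> 'M[R]_p)
  (psi : nat -> 'I_p -> R -> R) (pi : nat -> R) : Prop :=
  [/\ forall i, L2vec a b (psi i),
      forall i i', ipv a b (psi i) (psi i') = (i == i')%:R,
      forall i, let d := fun j s => covop a b K (psi i) j s - pi i * psi i j s in
                ipv a b d d = 0,
      forall i, pi i.+1 <= pi i &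
      forall x, L2vec a b x -> (forall i, ipv a b x (psi i) = 0) -> ipv a b x x = 0].

Definition fMMD2 (p : nat) (a b : R) (psi : nat -> 'I_p -> R -> R) (pi : nat -> R)
  (M : nat) (Y mu : 'I_p -> R -> R) : R :=
  \sum_(i < M) (pi i)^-1 * (ipv a b (fun j t => Y j t - mu j t) (psi i)) ^+ 2.

Definition hatX (p : nat) (S : {set 'I_p}) (X mu : 'I_p -> R -> R) : 'I_p -> R -> R :=
  fun j t => if j \in S then X j t else mu j t.

Definition theta (p : nat) (a b : R) (psi : nat -> 'I_p -> R -> R) (pi : nat -> R)
  (M : nat) (X mu : 'I_p -> R -> R) (k : 'I_p) : R :=
  \sum_(S : {set 'I_p} | k \notin S)
    ((#|S|)`!%:R * ((p - #|S| - 1)`!)%:R / (p`!)%:R) *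
    (fMMD2 a b psi pi M (hatX (k |: S) X mu) mu - fMMD2 a b psi pi M (hatX S X mu) mu).

End Defs.

From HB Require Import structures.
From mathcomp Require Import all_boot all_order all_algebra.
From mathcomp Require Import all_classical all_reals all_analysis.
From mathcomp Require Import ring lra.
Set Implicit Arguments.
Unset Strict Implicit.
Unset Printing Implicit Defensive.
Import Order.TTheory GRing.Theory Num.Theory.
Import measurable_realfun.
Local Open Scope ring_scope.

(* The covariance operator maps the mp-dimensional space of functions
   x_F(t) = F' phi(t) (F an m x p coefficient matrix) into itself and acts there
   as F |-> Scol F Srow, when <x_F, y> is read as the Frobenius product of F with
   the matrix of the <phi_i, y_j>.  Since Scol and Srow are positive definite,
   at most mp eigenvalues are nonzero, the corresponding eigenfunctions span that
   space, and fMMD^2 of x_D is tr(D' Scol^-1 D Srow^-1).  Keeping only the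
   columns in a coalition S replaces D = A - M_A by D P_S, so S |-> fMMD^2 is the
   quadratic game v(S) = sum_{j,l in S} c_jl with
   c_jl = (Srow^-1)_jl (D' Scol^-1 D)_lj.  The Shapley value of a symmetric
   quadratic game is sum_l c_kl, and Srow^-1 = V diag(1/lam) V' turns it into
   the stated formula. *)

Section IntegralOnInterval.
Variables (R : realType) (a b : R).
Local Notation mu := (@lebesgue_measure R).

Let mT : measurable (`[a, b] : set (measurableTypeR R)) := measurable_itv _.

Definition integrableT (f : R -> R) := mu.-integrable `[a, b] (EFin \o f).

Lemma integrableTD f g : integrableT f -> integrableT g ->
  integrableT (fun t => f t + g t).
Proof.
move=> intf intg; apply: eq_integrable mT _ _ _ (integrableD mT intf intg).
by move=> t _.
Qed.

Lemma integrableTZ c f : integrableT f -> integrableT (fun t => c * f t).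
Proof.
move=> intf; apply: eq_integrable mT _ _ _ (integrableZl mT c intf).
by move=> t _.
Qed.

Lemma integrableT_sum I (r : seq I) (F : I -> R -> R) :
  (forall i, integrableT (F i)) -> integrableT (fun t => \sum_(i <- r) F i t).
Proof.
move=> intF; apply: eq_integrable mT _ _ _ (integrable_sum mT r (fun i _ => intF i)).
by move=> t _ /=; rewrite sumEFin.
Qed.

Lemma L2fun_integrableM f g : L2fun a b f -> L2fun a b g ->
  integrableT (fun t => f t * g t).
Proof.
move=> [mf intf] [mg intg].
apply: (le_integrable mT); last exact: (integrableD mT intf intg).
  by apply/measurable_EFinP; exact: measurable_funM.
move=> t _ /=; rewrite lee_fin.
rewrite [X in _ <= X]ger0_norm ?addr_ge0 ?sqr_ge0 //.
by rewrite ler_norml; apply/andP; split; nra.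
Qed.

Lemma L2funD f g : L2fun a b f -> L2fun a b g -> L2fun a b (fun t => f t + g t).
Proof.
move=> L2f L2g; have intfg := L2fun_integrableM L2f L2g.
case: L2f L2g => [mf intf] [mg intg]; split; first exact: measurable_funD.
have intS := integrableTD (integrableTD intf (integrableTZ 2 intfg)) intg.
by apply: eq_integrable mT _ _ _ intS => t _ /=; congr EFin; ring.
Qed.

Lemma L2funZ c f : L2fun a b f -> L2fun a b (fun t => c * f t).
Proof.
move=> [mf intf]; split; first exact: measurable_funM.
apply: eq_integrable mT _ _ _ (integrableTZ (c ^+ 2) intf) => t _ /=.
by rewrite exprMn.
Qed.

Lemma L2fun_sum I (r : seq I) (F : I -> R -> R) :
  (forall i, L2fun a b (F i)) -> L2fun a b (fun t => \sum_(i <- r) F i t).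
Proof.
move=> L2F; rewrite -fct_sumE; apply: (big_ind (L2fun a b)) => //.
- split; first exact: measurable_cst.
  by apply: eq_integrable mT _ _ _ (integrable0 mu _) => t _ /=; rewrite expr0n.
- by move=> f g; exact: L2funD.
Qed.

Lemma intTD f g : integrableT f -> integrableT g ->
  intT a b (fun t => f t + g t) = intT a b f + intT a b g.
Proof. exact: RintegralD. Qed.

Lemma intTZ c f : integrableT f -> intT a b (fun t => c * f t) = c * intT a b f.
Proof. exact: RintegralZl. Qed.

Lemma intT_sum I (r : seq I) (F : I -> R -> R) :
  (forall i, integrableT (F i)) ->
  intT a b (fun t => \sum_(i <- r) F i t) = \sum_(i <- r) intT a b (F i).
Proof.
move=> intF; elim: r => [|i r IHr].
  under eq_fun do rewrite big_nil.
  by rewrite big_nil /intT Rintegral_cst ?mul0r.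
under eq_fun do rewrite big_cons.
by rewrite intTD ?big_cons ?IHr //; exact: integrableT_sum.
Qed.

Lemma intT_comb I (r : seq I) (c : I -> R) (F : I -> R -> R) :
  (forall i, integrableT (F i)) ->
  intT a b (fun t => \sum_(i <- r) c i * F i t) = \sum_(i <- r) c i * intT a b (F i).
Proof.
move=> intF; rewrite intT_sum => [|i]; last exact: integrableTZ.
by apply: eq_bigr => i _; rewrite intTZ.
Qed.

Lemma intT_ge0 f : (forall t, 0 <= f t) -> 0 <= intT a b f.
Proof. by move=> f_ge0; apply: Rintegral_ge0 => t _. Qed.

End IntegralOnInterval.

Lemma quad_ge0_lin_eq0 (R : realFieldType) (u v : R) :
  0 <= v -> (forall s, 0 <= 2 * s * u + s ^+ 2 * v) -> u = 0.
Proof.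
move=> v_ge0 quad_ge0; have v1_gt0 : 0 < v + 1 by lra.
have := quad_ge0 (- u / (v + 1)).
have -> : 2 * (- u / (v + 1)) * u + (- u / (v + 1)) ^+ 2 * v
          = - (u ^+ 2 * (v + 2)) / (v + 1) ^+ 2.
  by field; rewrite lt0r_neq0.
rewrite pmulr_lge0 ?invr_gt0 ?exprn_gt0 // oppr_ge0 => u2_le0.
by apply/eqP; rewrite -sqrf_eq0 eq_le sqr_ge0 andbT; nra.
Qed.

Section InnerProduct.
Variables (R : realType) (a b : R) (p : nat).
Implicit Types x y z : 'I_p -> R -> R.
Local Notation ip := (ipv a b).
Local Notation L2 := (L2vec a b).

Lemma L2vecD x y : L2 x -> L2 y -> L2 (fun j t => x j t + y j t).
Proof. by move=> L2x L2y j; exact: L2funD. Qed.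

Lemma L2vecZ c x : L2 x -> L2 (fun j t => c * x j t).
Proof. by move=> L2x j; exact: L2funZ. Qed.

Lemma L2vecB x y : L2 x -> L2 y -> L2 (fun j t => x j t - y j t).
Proof.
move=> L2x L2y; have := L2vecD L2x (L2vecZ (-1) L2y).
by under eq_fun do under eq_fun do rewrite mulN1r.
Qed.

Lemma L2vec_sum I (r : seq I) (c : I -> R) (z : I -> 'I_p -> R -> R) :
  (forall i, L2 (z i)) -> L2 (fun j t => \sum_(i <- r) c i * z i j t).
Proof.
move=> L2z j; apply: (@L2fun_sum _ _ _ _ r (fun i t => c i * z i j t)) => i.
exact/L2funZ/L2z.
Qed.

Lemma ipvC x y : ip x y = ip y x.
Proof. by apply: eq_bigr => j _; congr intT; apply/funext => t; rewrite mulrC. Qed.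

Lemma ipvDl x y z : L2 x -> L2 y -> L2 z ->
  ip (fun j t => x j t + y j t) z = ip x z + ip y z.
Proof.
move=> L2x L2y L2z; rewrite /ipv -big_split; apply: eq_bigr => j _ /=.
by under eq_fun do rewrite mulrDl; rewrite intTD //; exact: L2fun_integrableM.
Qed.

Lemma ipvZl c x z : L2 x -> L2 z -> ip (fun j t => c * x j t) z = c * ip x z.
Proof.
move=> L2x L2z; rewrite /ipv mulr_sumr; apply: eq_bigr => j _.
by under eq_fun do rewrite -mulrA; rewrite intTZ //; exact: L2fun_integrableM.
Qed.

Lemma ipvBl x y z : L2 x -> L2 y -> L2 z ->
  ip (fun j t => x j t - y j t) z = ip x z - ip y z.
Proof.
move=> L2x L2y L2z.
rewrite -mulN1r -ipvZl // -ipvDl //; last exact: L2vecZ.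
by under [in RHS]eq_fun do under eq_fun do rewrite mulN1r.
Qed.

Lemma ipv_suml I (r : seq I) (c : I -> R) (z : I -> 'I_p -> R -> R) y :
  (forall i, L2 (z i)) -> L2 y ->
  ip (fun j t => \sum_(i <- r) c i * z i j t) y = \sum_(i <- r) c i * ip (z i) y.
Proof.
move=> L2z L2y; elim: r => [|i r IHr].
  rewrite big_nil /ipv big1 // => j _; under eq_fun do rewrite big_nil mul0r.
  by rewrite /intT Rintegral_cst ?mul0r.
under eq_fun do under eq_fun do rewrite big_cons.
by rewrite ipvDl ?ipvZl ?IHr ?big_cons //; [exact: L2vecZ | exact: L2vec_sum].
Qed.

Lemma ipv_ge0 x : 0 <= ip x x.
Proof. by apply: sumr_ge0 => j _; apply: intT_ge0 => t; rewrite -expr2 sqr_ge0. Qed.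

Lemma ipv_null x y : L2 x -> L2 y -> ip x x = 0 -> ip x y = 0.
Proof.
move=> L2x L2y xx0; apply: (quad_ge0_lin_eq0 (ipv_ge0 y)) => s.
set z := fun j t => x j t + s * y j t.
have L2sy : L2 (fun j t => s * y j t) by exact: L2vecZ.
have L2z : L2 z by exact: L2vecD.
have -> : 2 * s * ip x y + s ^+ 2 * ip y y = ip z z.
  rewrite ipvDl // ipvZl // [ip x z]ipvC [ip y z]ipvC !ipvDl // !ipvZl //.
  by rewrite xx0 [ip y x]ipvC; ring.
exact: ipv_ge0.
Qed.

End InnerProduct.

Section Frobenius.
Variables (R : comPzRingType) (m p : nat).
Implicit Types U W : 'M[R]_(m, p).

Definition frob U W := \tr (U^T *m W).

Lemma frobE U W : frob U W = \sum_(i < m) \sum_(j < p) U i j * W i j.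
Proof.
rewrite /frob /mxtrace exchange_big; apply: eq_bigr => j _.
by rewrite mxE; apply: eq_bigr => i _; rewrite mxE.
Qed.

Lemma frobC U W : frob U W = frob W U.
Proof. by rewrite /frob -mxtrace_tr trmx_mul trmxK. Qed.

Lemma frob0r U : frob U 0 = 0.
Proof. by rewrite /frob mulmx0 mxtrace0. Qed.

Lemma frob_sumr n U (c : 'I_n -> R) (W : 'I_n -> 'M[R]_(m, p)) :
  frob U (\sum_(l < n) c l *: W l) = \sum_(l < n) c l * frob U (W l).
Proof.
rewrite /frob mulmx_sumr raddf_sum; apply: eq_bigr => l _.
by rewrite -scalemxAr; apply: mxtraceZ.
Qed.

End Frobenius.

Section Coordinates.
Variables (R : realType) (a b : R) (m p : nat) (phi : 'I_m -> R -> R).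
Hypothesis phi_L2 : forall i, L2fun a b (phi i).

Definition coef_fun (F : 'M[R]_(m, p)) : 'I_p -> R -> R :=
  fun j t => \sum_(i < m) F i j * phi i t.

Definition coef_of (y : 'I_p -> R -> R) : 'M[R]_(m, p) :=
  \matrix_(i, j) intT a b (fun t => phi i t * y j t).

Definition gram : 'M[R]_m := \matrix_(i, l) intT a b (fun t => phi i t * phi l t).

Let phi_integrableM f : L2fun a b f -> forall i, integrableT a b (fun t => phi i t * f t).
Proof. by move=> L2f i; exact: L2fun_integrableM. Qed.

Lemma L2vec_coef_fun F : L2vec a b (coef_fun F).
Proof.
move=> j; apply: (@L2fun_sum _ _ _ _ _ (fun i t => F i j * phi i t)) => i.
exact/L2funZ/phi_L2.
Qed.

Lemma ipv_coef_fun F y : L2vec a b y -> ipv a b (coef_fun F) y = frob F (coef_of y).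
Proof.
move=> L2y; rewrite /ipv frobE exchange_big; apply: eq_bigr => j _.
have -> : (fun t => coef_fun F j t * y j t)
          = fun t => \sum_(i < m) F i j * (phi i t * y j t).
  by apply/funext => t; rewrite big_distrl; apply: eq_bigr => i _; rewrite mulrA.
by rewrite intT_comb; [under eq_bigr do rewrite mxE | exact: phi_integrableM].
Qed.

Lemma coef_of_coef_fun E : coef_of (coef_fun E) = gram *m E.
Proof.
apply/matrixP => i j; rewrite !mxE.
have -> : (fun t => phi i t * coef_fun E j t)
          = fun t => \sum_(l < m) E l j * (phi i t * phi l t).
  by apply/funext => t; rewrite big_distrr; apply: eq_bigr => l _; rewrite mulrCA.
rewrite intT_comb => [|l]; last exact/phi_integrableM/phi_L2.
by apply: eq_bigr => l _; rewrite mxE mulrC.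
Qed.

Lemma gram_tr : gram^T = gram.
Proof. by apply/matrixP => i l; rewrite !mxE; congr intT; apply/funext => t; rewrite mulrC. Qed.

Lemma covop_sepK (Srow : 'M[R]_p) (Scol : 'M[R]_m) y :
  Srow^T = Srow -> L2vec a b y ->
  covop a b (sepK Srow (kappa Scol phi)) y = coef_fun (Scol *m coef_of y *m Srow).
Proof.
move=> Srow_sym L2y; apply/funext => j; apply/funext => s.
have entry l : intT a b (fun t => sepK Srow (kappa Scol phi) s t j l * y l t)
    = \sum_(i < m) \sum_(i' < m) phi i s * Scol i i' * Srow j l * coef_of y i' l.
  have -> : (fun t => sepK Srow (kappa Scol phi) s t j l * y l t) = fun t =>
      \sum_(i < m) \sum_(i' < m) phi i s * Scol i i' * Srow j l * (phi i' t * y l t).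
    apply/funext => t; rewrite mxE /kappa !big_distrl; apply: eq_bigr => i _ /=.
    by rewrite !big_distrl; apply: eq_bigr => i' _ /=; ring.
  rewrite intT_sum => [|i]; last first.
    by apply: integrableT_sum => i'; apply/integrableTZ/phi_integrableM.
  apply: eq_bigr => i _; rewrite intT_comb => [|i']; last exact/phi_integrableM/L2y.
  by apply: eq_bigr => i' _; rewrite mxE.
rewrite /covop /coef_fun (eq_bigr _ (fun l _ => entry l)) exchange_big.
apply: eq_bigr => i _; rewrite !mxE big_distrl; apply: eq_bigr => l _.
have Srow_lj : Srow l j = Srow j l by rewrite -[in LHS]Srow_sym mxE.
rewrite !mxE !big_distrl; apply: eq_bigr => i' _.
by rewrite !mxE Srow_lj /=; ring.
Qed.

End Coordinates.

Lemma gram_unitmx (R : realType) (a b : R) m (phi : 'I_m -> R -> R) :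
  (forall i, L2fun a b (phi i)) -> lin_indep_L2 a b phi -> gram a b phi \in unitmx.
Proof.
move=> phi_L2 indep; rewrite unitmxE unitfE; apply/negP => /det0P [v v_neq0 vG0].
suff v0 : v = 0 by rewrite v0 eqxx in v_neq0.
(* [ipv_coef_fun] at p = 1 computes the quadratic form of the Gram matrix. *)
have := ipv_coef_fun phi_L2 v^T (L2vec_coef_fun phi_L2 v^T).
rewrite coef_of_coef_fun // /frob trmxK mulmxA vG0 mul0mx mxtrace0 /ipv big_ord1 => sq0.
apply/rowP => i; rewrite mxE; apply: indep i; rewrite -[X in _ = X]sq0; congr intT.
apply/funext => t; rewrite expr2 /coef_fun.
by congr (_ * _); apply: eq_bigr => l _; rewrite mxE.
Qed.

Lemma mulmx_row_colE (R : pzSemiRingType) m n p (X : 'M[R]_(m, n)) (Y : 'M[R]_(n, p))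
    i j :
  (row i X *m col j Y) 0 0 = (X *m Y) i j.
Proof. by rewrite colE mulmxA -colE -row_mul !mxE. Qed.

Section PositiveDefinite.
Variables (R : realType) (n : nat) (S : 'M[R]_n).
Hypothesis S_pd : posdef S.

Lemma posdef_ge0 (u : 'cV[R]_n) : 0 <= (u^T *m S *m u) 0 0.
Proof. by have [->|/S_pd/ltW //] := eqVneq u 0; rewrite mulmx0 mxE. Qed.

Lemma posdef_eq0 (u : 'cV[R]_n) : (u^T *m S *m u) 0 0 = 0 -> u = 0.
Proof. by move=> form0; have [//|/S_pd] := eqVneq u 0; rewrite form0 ltxx. Qed.

Lemma posdef_unitmx : S \in unitmx.
Proof.
rewrite unitmxE unitfE; apply/negP => /det0P [v v_neq0 vS0].
suff /(congr1 trmx) : v^T = 0 by rewrite trmxK trmx0 => v0; rewrite v0 eqxx in v_neq0.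
by apply: posdef_eq0; rewrite trmxK vS0 mul0mx mxE.
Qed.

End PositiveDefinite.

Section OrthonormalEigenbasis.
Variables (R : realType) (p : nat) (S : 'M[R]_p) (lam : 'I_p -> R) (V : 'M[R]_p).
Hypothesis S_eig : forall j, S *m col j V = lam j *: col j V.
Hypothesis V_orth : V^T *m V = 1%:M.

Lemma eigvec_decomp : S = V *m diag_mx (\row_j lam j) *m V^T.
Proof.
have SV : S *m V = V *m diag_mx (\row_j lam j).
  apply/matrixP => i j; rewrite mul_mx_diag !mxE.
  have := congr1 (fun u : 'cV[R]_p => u i 0) (S_eig j); rewrite /= !mxE mulrC => <-.
  by apply: eq_bigr => l _; rewrite !mxE.
by rewrite -SV -mulmxA (mulmx1C V_orth) mulmx1.
Qed.

Lemma eigvec_normE j : ((col j V)^T *m col j V) 0 0 = 1.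
Proof.
have := congr1 (fun M : 'M[R]_p => M j j) V_orth; rewrite /= [RHS]mxE eqxx mulr1n => <-.
by rewrite !mxE; apply: eq_bigr => l _; rewrite !mxE.
Qed.

Hypothesis S_pd : posdef S.

Lemma eigval_gt0 j : 0 < lam j.
Proof.
have colj_neq0 : col j V != 0.
  by apply: contra_neq (@oner_neq0 R) => colj0; rewrite -(eigvec_normE j) colj0 mulmx0 mxE.
by have := S_pd colj_neq0; rewrite -mulmxA S_eig -scalemxAr mxE eigvec_normE mulr1.
Qed.

Lemma invmx_eigvec : invmx S = V *m diag_mx (\row_j (lam j)^-1) *m V^T.
Proof.
have inv_mulS : V *m diag_mx (\row_j (lam j)^-1) *m V^T *m S = 1%:M.
  rewrite eigvec_decomp !mulmxA -[_ *m V^T *m V]mulmxA V_orth mulmx1.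
  rewrite -[_ *m diag_mx _ *m diag_mx _]mulmxA mulmx_diag.
  have -> : \row_j ((\row_j (lam j)^-1) 0 j * (\row_j lam j) 0 j) = const_mx (1 : R).
    by apply/rowP => j; rewrite !mxE mulVf ?lt0r_neq0 ?eigval_gt0.
  by rewrite diag_const_mx mulmx1 (mulmx1C V_orth).
have S_unit : S \in unitmx by case: (mulmx1_unit inv_mulS).
by rewrite -[RHS]mulmx1 -(mulmxV S_unit) mulmxA inv_mulS mul1mx.
Qed.

Lemma invmx_eigvec_mulE (B : 'M[R]_p) k : B^T = B ->
  (invmx S *m B) k k = \sum_(j < p) (lam j)^-1 * V k j * (B *m V) k j.
Proof.
move=> B_sym; rewrite invmx_eigvec -!mulmxA mxE; apply: eq_bigr => j _.
have -> : (B *m V) k j = (V^T *m B)^T k j by rewrite trmx_mul trmxK B_sym.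
by rewrite mul_diag_mx !mxE mulrCA mulrA.
Qed.

End OrthonormalEigenbasis.

Lemma frob_sandwich_inv (R : comUnitRingType) m p (C : 'M[R]_m) (S : 'M[R]_p) U D :
  C^T = C -> S^T = S -> C \in unitmx -> S \in unitmx ->
  frob (C *m U *m S) (invmx C *m D *m invmx S) = frob U D.
Proof.
move=> C_sym S_sym C_unit S_unit; rewrite /frob !trmx_mul C_sym S_sym.
rewrite -!mulmxA mxtrace_mulC -!mulmxA [C *m (invmx C *m _)]mulmxA mulmxV // mul1mx.
by rewrite !mulmxA mulmxKV.
Qed.

Section Sandwich.
Variables (R : realType) (m p : nat) (C : 'M[R]_m) (S : 'M[R]_p).
Variables (lam : 'I_p -> R) (V : 'M[R]_p).
Hypotheses (C_sym : C^T = C) (C_pd : posdef C) (S_sym : S^T = S) (S_pd : posdef S).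
Hypothesis S_eig : forall j, S *m col j V = lam j *: col j V.
Hypothesis V_orth : V^T *m V = 1%:M.

Lemma frob_sandwichE U : frob (C *m U *m S) U =
  \sum_(j < p) lam j * ((col j (U *m V))^T *m C *m col j (U *m V)) 0 0.
Proof.
have -> : frob (C *m U *m S) U =
    \tr (diag_mx (\row_j lam j) *m ((U *m V)^T *m C *m (U *m V))).
  rewrite /frob !trmx_mul C_sym S_sym (eigvec_decomp S_eig V_orth) -!mulmxA.
  by rewrite mxtrace_mulC !mulmxA.
rewrite mul_diag_mx; apply: eq_bigr => j _.
by rewrite mxE tr_col -row_mul mulmx_row_colE mxE.
Qed.

Let summand_ge0 U j : 0 <= lam j * ((col j (U *m V))^T *m C *m col j (U *m V)) 0 0.
Proof. by rewrite mulr_ge0 ?posdef_ge0 ?(ltW (eigval_gt0 S_eig V_orth S_pd j)). Qed.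

Lemma frob_sandwich_ge0 U : 0 <= frob (C *m U *m S) U.
Proof. by rewrite frob_sandwichE sumr_ge0. Qed.

Lemma frob_sandwich_eq0 U : frob (C *m U *m S) U = 0 -> U = 0.
Proof.
rewrite frob_sandwichE => /(psumr_eq0P (fun j _ => summand_ge0 U j)) sum0.
have UV0 : U *m V = 0.
  apply/matrixP => i j; rewrite mxE; move/eqP: (sum0 j isT).
  rewrite mulf_eq0 gt_eqF ?(eigval_gt0 S_eig V_orth S_pd) //= => /eqP.
  by move/(posdef_eq0 C_pd)/(congr1 (fun u : 'cV[R]_m => u i 0)); rewrite !mxE.
by rewrite -[U]mulmx1 -(mulmx1C V_orth) mulmxA UV0 mul0mx.
Qed.

End Sandwich.

Section CovarianceSpectrum.
Variables (R : realType) (a b : R) (m p : nat) (phi : 'I_m -> R -> R).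
Variables (Srow : 'M[R]_p) (Scol : 'M[R]_m) (lam : 'I_p -> R) (V : 'M[R]_p).
Variables (psi : nat -> 'I_p -> R -> R) (pi : nat -> R).
Hypotheses (phi_L2 : forall i, L2fun a b (phi i)) (phi_indep : lin_indep_L2 a b phi).
Hypotheses (Srow_sym : Srow^T = Srow) (Srow_pd : posdef Srow).
Hypotheses (Scol_sym : Scol^T = Scol) (Scol_pd : posdef Scol).
Hypothesis Srow_eig : forall j, Srow *m col j V = lam j *: col j V.
Hypothesis V_orth : V^T *m V = 1%:M.
Hypothesis spectral : spectral_decomp a b (sepK Srow (kappa Scol phi)) psi pi.

Local Notation W i := (coef_of a b phi (psi i)).
Local Notation T U := (Scol *m U *m Srow).
Local Notation G := (gram a b phi).

Let psi_L2 i : L2vec a b (psi i).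
Proof. by case: spectral. Qed.

Let psi_orthonormal i i' : ipv a b (psi i) (psi i') = (i == i')%:R.
Proof. by case: spectral. Qed.

Let L2_coef (F : 'M[R]_(m, p)) : L2vec a b (coef_fun phi F) := L2vec_coef_fun phi_L2 F.

Local Hint Resolve psi_L2 L2_coef : core.

Lemma ipv_eigen i y : L2vec a b y ->
  ipv a b (coef_fun phi (T (W i))) y = pi i * ipv a b (psi i) y.
Proof.
move=> L2y; case: spectral => _ _ eigen _ _.
have := eigen i; rewrite /= (covop_sepK phi_L2 _ Srow_sym (psi_L2 i)) => dd0.
have L2pipsi := L2vecZ (pi i) (psi_L2 i).
have := ipv_null (L2vecB (L2_coef _) L2pipsi) L2y dd0.
by rewrite ipvBl ?ipvZl // => /subr0_eq.
Qed.

Lemma frob_eigen i i' : frob (T (W i)) (W i') = pi i * (i == i')%:R.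
Proof. by rewrite -(ipv_coef_fun phi_L2) // ipv_eigen // psi_orthonormal. Qed.

Lemma frob_eigen_gram i E : frob (T (W i)) (G *m E) = pi i * frob E (W i).
Proof.
rewrite -coef_of_coef_fun // -ipv_coef_fun // ipv_eigen //.
by rewrite ipvC ipv_coef_fun.
Qed.

Lemma eigval_frob i : pi i = frob (T (W i)) (W i).
Proof. by rewrite frob_eigen eqxx mulr1. Qed.

Let T_ge0 := frob_sandwich_ge0 Scol_sym Scol_pd Srow_sym Srow_pd Srow_eig V_orth.
Let T_eq0 := frob_sandwich_eq0 Scol_sym Scol_pd Srow_sym Srow_pd Srow_eig V_orth.

Lemma eigval_ge0 i : 0 <= pi i.
Proof. by rewrite eigval_frob T_ge0. Qed.

Lemma coef_eigen_eq0 i : pi i = 0 -> W i = 0.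
Proof. by rewrite eigval_frob => /T_eq0. Qed.

Lemma eigval_nonincr i j : (i <= j)%N -> pi j <= pi i.
Proof.
by case: spectral => _ _ _ pi_nonincr _; exact: (Order.NatMonotonyTheory.nonincnP pi_nonincr).
Qed.

(* Positive eigenvalues pi_0, ..., pi_(mp) would give mp + 1 linearly independent
   coefficient matrices W_i in the mp-dimensional space of m x p matrices. *)
Lemma eigval_dim_eq0 : pi (m * p) = 0.
Proof.
apply/eqP; apply: contraT => pi_neq0.
have pi_gt0 i : (i <= m * p)%N -> 0 < pi i.
  by move=> le_i; apply: lt_le_trans (eigval_nonincr le_i); rewrite lt_def pi_neq0 eigval_ge0.
pose X := [tuple W i | i < (m * p).+1].
have X_free : free X.
  apply/freeP => k sumX0 i; have := congr1 (frob (T (W i))) sumX0.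
  under eq_bigr do rewrite nth_mktuple.
  rewrite frob_sumr frob0r (bigD1 i) //= frob_eigen eqxx mulr1 big1 ?addr0.
    by move/eqP; rewrite mulf_eq0 (gt_eqF (pi_gt0 _ (ltn_ord i))) orbF => /eqP.
  move=> l neq_li; rewrite frob_eigen -[(i : nat) == l]/(i == l).
  by rewrite eq_sym (negbTE neq_li) !mulr0.
have := dimvS (subvf <<X>>%VS).
by rewrite dimvf /dim /= (eqP X_free) size_tuple ltnn.
Qed.

Lemma coef_eigen_vanish i : (m * p <= i)%N -> W i = 0.
Proof.
move=> le_i; apply: coef_eigen_eq0; apply/eqP.
by rewrite eq_le eigval_ge0 andbT -eigval_dim_eq0 eigval_nonincr.
Qed.

(* The residual of x_F after projection on psi_0, ..., psi_(mp-1) is orthogonal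
   to every psi_n (W n = 0 beyond mp), hence null by completeness. *)
Lemma frob_gram_parseval F E :
  frob F (G *m E) = \sum_(i < m * p) frob F (W i) * frob E (W i).
Proof.
pose c (i : 'I_(m * p)) := frob F (W i).
pose y j t := coef_fun phi F j t - \sum_(i < m * p) c i * psi i j t.
have L2y : L2vec a b y by apply: L2vecB => //; exact: L2vec_sum.
have ipv_y z : L2vec a b z -> ipv a b y z =
    ipv a b (coef_fun phi F) z - \sum_(i < m * p) c i * ipv a b (psi i) z.
  by move=> L2z; rewrite ipvBl ?ipv_suml //; exact: L2vec_sum.
have y_orth n : ipv a b y (psi n) = 0.
  rewrite ipv_y // ipv_coef_fun //; under eq_bigr do rewrite psi_orthonormal.
  have [lt_n|le_n] := ltnP n (m * p).
    rewrite (bigD1 (Ordinal lt_n)) //= eqxx mulr1 big1 ?addr0 ?subrr // => i neq_i.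
    by rewrite -[(i : nat) == n]/(i == Ordinal lt_n) (negbTE neq_i) mulr0.
  rewrite big1 ?subr0 ?coef_eigen_vanish ?frob0r // => i _.
  by rewrite ltn_eqF ?mulr0 // (leq_trans (ltn_ord i) le_n).
have yy0 : ipv a b y y = 0 by case: spectral => _ _ _ _; apply.
have := ipv_null L2y (L2_coef E) yy0.
rewrite ipv_y // ipv_coef_fun // coef_of_coef_fun // => /subr0_eq ->.
by apply: eq_bigr => i _; rewrite ipvC ipv_coef_fun.
Qed.

(* For G X = Scol^-1 D Srow^-1 the eigen-relation gives <x_D, psi_i> =
   pi_i <x_X, psi_i>, so the i-th summand is <x_X, psi_i> <x_D, psi_i>. *)
Lemma fMMD2_coef_fun Y mu D : (fun j t => Y j t - mu j t) = coef_fun phi D ->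
  fMMD2 a b psi pi (m * p) Y mu = frob (invmx Scol *m D *m invmx Srow) D.
Proof.
move=> YmuD; set C := invmx Scol *m D *m invmx Srow.
pose X := invmx G *m C.
have GX : G *m X = C by rewrite mulmxA mulmxV ?mul1mx // gram_unitmx.
have frob_D i : frob D (W i) = pi i * frob X (W i).
  rewrite -frob_eigen_gram GX frob_sandwich_inv ?posdef_unitmx //.
  exact: frobC.
rewrite /fMMD2 YmuD -GX /frob trmx_mul gram_tr -mulmxA -/(frob X (G *m D)).
rewrite frob_gram_parseval; apply: eq_bigr => i _; rewrite ipv_coef_fun //.
have [pi0|pi_neq0] := eqVneq (pi i) 0.
  by rewrite coef_eigen_eq0 // !frob0r mulr0 expr0n /= mulr0.
by rewrite frob_D; field.
Qed.

End CovarianceSpectrum.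

Section ShapleyValue.
Variables (R : numFieldType) (p : nat).
Implicit Types (S : {set 'I_p}) (k l : 'I_p).

Definition shapley_weight S : R := (#|S|)`!%:R * ((p - #|S| - 1)`!)%:R / (p`!)%:R.

Lemma card_lt_notin k S : k \notin S -> (#|S| < p)%N.
Proof. by move=> kS; have := max_card (k |: S); rewrite cardsU1 kS card_ord. Qed.

Lemma card_draws_notin k s :
  #|[set S : {set 'I_p} | k \notin S & #|S| == s]| = 'C(p.-1, s).
Proof.
have <- : #|[set~ k]| = p.-1 by rewrite cardsC1 card_ord.
rewrite -cards_draws; apply: eq_card => S; rewrite !inE; congr andb.
apply/idP/fintype.subsetP => [kS x xS | sub].
  by rewrite !inE; apply: contraNneq kS => <-.
by apply/negP => /sub; rewrite !inE eqxx.
Qed.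

Lemma sum_card_notin k (F : nat -> R) :
  \sum_(S : {set 'I_p} | k \notin S) F #|S| = \sum_(s < p.+1) 'C(p.-1, s)%:R * F s.
Proof.
have card_lt (S : {set 'I_p}) : (#|S| < p.+1)%N by have := max_card S; rewrite card_ord.
rewrite (partition_big (fun S : {set 'I_p} => inord #|S| : 'I_p.+1) predT) //=.
apply: eq_bigr => s _; rewrite -(card_draws_notin k) mulr_natl -sumr_const.
apply: eq_big => [S|S /andP[_ /eqP <-]]; last by rewrite inordK.
by rewrite !inE -(inj_eq val_inj) /= inordK.
Qed.

Lemma sum_shapley_weight k : \sum_(S : {set 'I_p} | k \notin S) shapley_weight S = 1.
Proof.
have p_gt0 : (0 < p)%N by apply: leq_ltn_trans (ltn_ord k).
rewrite (sum_card_notin k (fun s => s`!%:R * (p - s - 1)`!%:R / p`!%:R)) /=.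
rewrite big_ord_recr /= bin_small ?prednK // mul0r addr0.
have term (s : 'I_p) : 'C(p.-1, s)%:R * (s`!%:R * (p - s - 1)`!%:R / p`!%:R)
                       = (p.-1)`!%:R / p`!%:R :> R.
  have le_s : (s <= p.-1)%N by rewrite -ltnS prednK.
  by rewrite !mulrA -!natrM -mulnA subnAC subn1 bin_fact.
rewrite (eq_bigr _ (fun s _ => term s)) sumr_const card_ord -mulrnAl -mulr_natr -natrM.
by rewrite mulnC -{1}(prednK p_gt0) -factS prednK // divff // pnatr_eq0 -lt0n fact_gt0.
Qed.

Lemma shapley_weight_compl k S :
  k \notin S -> shapley_weight (~: S :\ k) = shapley_weight S.
Proof.
move=> kS; have := card_lt_notin kS; have := cardsD1 k (~: S); have := cardsC S.
rewrite card_ord !inE kS /= => cardC cardD lt_S.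
have card_c : #|~: S :\ k| = (p - #|S| - 1)%N.
  by rewrite -[X in (X - #|S| - 1)%N]cardC cardD addKn add1n subn1.
have card_cc : (p - (p - #|S| - 1) - 1 = #|S|)%N.
  rewrite subnAC [(p - #|S| - 1)%N]subnAC subKn // subn1.
  by rewrite -ltnS prednK // (leq_ltn_trans _ lt_S).
by rewrite /shapley_weight card_c card_cc; congr (_ / _); exact: mulrC.
Qed.

(* The involution S |-> complement of S \cup {k} preserves the Shapley weight and
   exchanges the coalitions containing l with those not containing l. *)
Lemma sum_shapley_weight_mem k l : l != k ->
  \sum_(S : {set 'I_p} | k \notin S) shapley_weight S * (l \in S)%:R = 2^-1.
Proof.
move=> lk; pose c S := ~: S :\ k.
have c_notin S : k \notin c S by rewrite !inE eqxx.
have cK S : k \notin S -> c (c S) = S.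
  move=> kS; apply/setP => x; rewrite !inE.
  by case: eqVneq => [->|_]; rewrite ?negbK ?(negbTE kS).
have swap : \sum_(S : {set 'I_p} | k \notin S) shapley_weight S * (l \in S)%:R
          = \sum_(S : {set 'I_p} | k \notin S) shapley_weight S * (l \notin S)%:R.
  rewrite (reindex_onto c c cK); apply: eq_big => [S|S /andP[_ /eqP ccS]].
    by rewrite c_notin; apply/eqP/idP => [<-|/cK //]; exact: c_notin.
  have kS : k \notin S by rewrite -ccS c_notin.
  by rewrite shapley_weight_compl // !inE lk.
have twice : 2 * \sum_(S : {set 'I_p} | k \notin S) shapley_weight S * (l \in S)%:R = 1.
  rewrite mulr_natl mulr2n {2}swap -big_split -[RHS](sum_shapley_weight k).
  apply: eq_bigr => S _ /=; rewrite -mulrDr.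
  by case: (l \in S); rewrite /= ?addr0 ?add0r mulr1.
by apply: (@mulfI _ 2); rewrite ?pnatr_eq0 // twice divff ?pnatr_eq0.
Qed.

Definition quad_game (c : 'I_p -> 'I_p -> R) S := \sum_(j in S) \sum_(l in S) c j l.

Lemma quad_game_marginal (c : 'I_p -> 'I_p -> R) k S :
  (forall j l, c j l = c l j) -> k \notin S ->
  quad_game c (k |: S) - quad_game c S = c k k + 2 * \sum_(l in S) c k l.
Proof.
move=> c_sym kS.
have add_k j : \sum_(l in k |: S) c j l = c j k + \sum_(l in S) c j l by rewrite big_setU1.
rewrite /quad_game big_setU1 //= add_k (eq_bigr _ (fun j _ => add_k j)) big_split /=.
by rewrite (eq_bigr _ (fun j _ => c_sym j k)); ring.
Qed.

Lemma shapley_quad_game (c : 'I_p -> 'I_p -> R) k : (forall j l, c j l = c l j) ->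
  \sum_(S : {set 'I_p} | k \notin S)
      shapley_weight S * (quad_game c (k |: S) - quad_game c S) = \sum_l c k l.
Proof.
move=> c_sym.
transitivity (\sum_(S : {set 'I_p} | k \notin S) (shapley_weight S * c k k +
    \sum_l 2 * c k l * (shapley_weight S * (l \in S)%:R))).
  apply: eq_bigr => S kS; rewrite quad_game_marginal // mulrDr; congr (_ + _).
  rewrite big_mkcond !mulr_sumr; apply: eq_bigr => l _.
  by case: (l \in S); rewrite /= ?mulr1 ?mulr0; ring.
rewrite big_split /= -mulr_suml sum_shapley_weight mul1r exchange_big /=.
under eq_bigr do rewrite -mulr_sumr.
rewrite [RHS](bigD1 k) //= [X in _ + X](bigD1 k) //= big1 => [|S kS]; last first.
  by rewrite (negbTE kS) mulr0.
rewrite mulr0 add0r; congr (_ + _); apply: eq_bigr => l lk.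
by rewrite sum_shapley_weight_mem // mulrAC divff ?mul1r ?pnatr_eq0.
Qed.

End ShapleyValue.

Arguments shapley_weight {R p} S.

Section Coalitions.
Variables (R : realType) (m p : nat).

Definition mask_mx (S : {set 'I_p}) : 'M[R]_p := diag_mx (\row_j (j \in S)%:R).

Lemma hatX_coef_fun (phi : 'I_m -> R -> R) (A MA : 'M[R]_(m, p)) S :
  (fun j t => hatX S (coef_fun phi A) (coef_fun phi MA) j t - coef_fun phi MA j t)
  = coef_fun phi ((A - MA) *m mask_mx S).
Proof.
apply/funext => j; apply/funext => t; rewrite /hatX /coef_fun mul_mx_diag.
case: (boolP (j \in S)) => jS; last first.
  by rewrite subrr big1 // => i _; rewrite !mxE (negbTE jS) mulr0 mul0r.
by rewrite -sumrB; apply: eq_bigr => i _; rewrite !mxE jS mulr1 mulrBl.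
Qed.

Lemma frob_sandwich_mask (C : 'M[R]_m) (Q : 'M[R]_p) (D : 'M[R]_(m, p)) S :
  C^T = C -> Q^T = Q ->
  frob (C *m (D *m mask_mx S) *m Q) (D *m mask_mx S)
  = quad_game (fun j l => Q j l * (D^T *m C *m D) l j) S.
Proof.
move=> C_sym Q_sym; have P_sym : (mask_mx S)^T = mask_mx S by exact: tr_diag_mx.
have -> : frob (C *m (D *m mask_mx S) *m Q) (D *m mask_mx S)
          = \tr ((mask_mx S *m Q *m mask_mx S) *m (D^T *m C *m D)).
  by rewrite /frob !trmx_mul C_sym Q_sym P_sym !mulmxA mxtrace_mulC !mulmxA.
set P := mask_mx S; set B := D^T *m C *m D.
have PSP j l : (P *m Q *m P) j l = (j \in S)%:R * (l \in S)%:R * Q j l.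
  by rewrite /P /mask_mx mul_mx_diag mul_diag_mx !mxE mulrAC.
rewrite /quad_game /mxtrace [RHS]big_mkcond; apply: eq_bigr => j _ /=.
rewrite mxE (eq_bigr _ (fun l _ => congr1 (fun x => x * B l j) (PSP j l))).
case: (j \in S); last by rewrite big1 // => l _; rewrite !mul0r.
by rewrite [RHS]big_mkcond; apply: eq_bigr => l _; case: (l \in S); rewrite /=; ring.
Qed.

End Coalitions.

Theorem lemma6 (R : realType) (a b : R) (m p : nat)
  (phi : 'I_m -> R -> R) (A MA : 'M[R]_(m, p))
  (Srow : 'M[R]_p) (Scol : 'M[R]_m)
  (lam : 'I_p -> R) (V : 'M[R]_p)
  (psi : nat -> 'I_p -> R -> R) (pi : nat -> R) (k : 'I_p) :
  a < b ->
  (forall i, L2fun a b (phi i)) ->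
  lin_indep_L2 a b phi ->
  Srow^T = Srow -> posdef Srow ->
  Scol^T = Scol -> posdef Scol ->
  (forall j, Srow *m col j V = lam j *: col j V) ->
  V^T *m V = 1%:M ->
  spectral_decomp a b (sepK Srow (kappa Scol phi)) psi pi ->
  theta a b psi pi (m * p)%N
    (fun j t => \sum_(i < m) A i j * phi i t)
    (fun j t => \sum_(i < m) MA i j * phi i t) k
  = \sum_(j < p) (lam j)^-1 * V k j *
      ((col k (A - MA))^T *m invmx Scol *m (A - MA) *m col j V) 0 0.
Proof.
move=> _ phi_L2 phi_indep Srow_sym Srow_pd Scol_sym Scol_pd Srow_eig V_orth spectral.
set D := A - MA; set B := D^T *m invmx Scol *m D.
have Sri_sym : (invmx Srow)^T = invmx Srow by rewrite trmx_inv Srow_sym.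
have Sci_sym : (invmx Scol)^T = invmx Scol by rewrite trmx_inv Scol_sym.
have B_sym : B^T = B by rewrite /B !trmx_mul trmxK Sci_sym mulmxA.
pose c j l := invmx Srow j l * B l j.
have c_sym j l : c j l = c l j by rewrite /c -[in LHS]Sri_sym -[in LHS]B_sym !mxE mulrC.
have game S : fMMD2 a b psi pi (m * p) (hatX S (coef_fun phi A) (coef_fun phi MA))
    (coef_fun phi MA) = quad_game c S.
  rewrite (fMMD2_coef_fun phi_L2 phi_indep Srow_sym Srow_pd Scol_sym Scol_pd Srow_eig
    V_orth spectral (hatX_coef_fun phi A MA S)).
  exact: frob_sandwich_mask.
transitivity (\sum_(S : {set 'I_p} | k \notin S)
    shapley_weight S * (quad_game c (k |: S) - quad_game c S)).
  by apply: eq_bigr => S _; rewrite !game.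
rewrite shapley_quad_game //; transitivity ((invmx Srow *m B) k k); first by rewrite mxE.
rewrite (invmx_eigvec_mulE Srow_eig V_orth Srow_pd) //; apply: eq_bigr => j _.
by rewrite tr_col -2!row_mul mulmx_row_colE.
Qed.
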